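(* Let $n\in\mathbb{N}_0\cup\{\infty\}$. If $n=0$, let $U=X$ be a topological space; if $n\ge 1$, let $X$ be a locally convex space over $\mathbb{K}$ and $U\subseteq X$ an open subset. Let $E_1,E_2,F$ be locally convex spaces, $\beta\colon E_1\times E_2\to F$ a bilinear map and $f\colon U\to E_1\times E_2$ a $C^n_{\mathbb{K}}$-map (for $n=0$: a continuous map). Assume that at least one of the following holds: (a) $X$ is metrizable and $\beta$ is sequentially continuous; or (b) $X$ is a $k^\infty$-space and $\beta$ is hypocontinuous in the second argument with respect to a set $\mathcal{S}$ of bounded subsets of $E_2$ which contains all compact subsets of $E_2$. Then $\beta\circ f\colon U\to F$ is $C^n_{\mathbb{K}}$.
   Context: $\mathbb{K}\in\{\mathbb{R},\mathbb{C}\}$; spaces serving as domain or range of differentiable maps are Hausdorff. Keller's $C^n$-maps: for $U\subseteq E$ open, $f\colon U\to F$ is $C^0_{\mathbb{K}}$ if continuous; $C^1_{\mathbb{K}}$ if continuous, the limit $df(x,y)=\lim_{t\to0}\frac{f(x+ty)-f(x)}{t}$ ($0\ne t\in\mathbb{K}$) exists for all $x\in U$, $y\in E$, and $df\colon U\times E\to F$ is continuous; $C^{n+1}_{\mathbb{K}}$ if $C^1_{\mathbb{K}}$ and $df$ is $C^n_{\mathbb{K}}$; $C^\infty_{\mathbb{K}}$ if $C^n_{\mathbb{K}}$ for all $n$. A Hausdorff space $X$ is a $k$-space if a subset $A\subseteq X$ is closed whenever $A\cap K$ is closed in $K$ for all compact $K\subseteq X$; $X$ is a $k^\infty$-space if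 it is Hausdorff and $X^n$ is a $k$-space for every $n\in\mathbb{N}$. A bilinear $\beta$ is hypocontinuous in the second argument with respect to $\mathcal{S}$ if it is separately continuous and for each $M\in\mathcal{S}$ and $0$-neighbourhood $W\subseteq F$ there is a $0$-neighbourhood $V\subseteq E_1$ with $\beta(V\times M)\subseteq W$. *)

From HB Require Import structures.
From mathcomp Require Import all_boot all_order all_algebra.
From mathcomp Require Import all_classical all_reals all_analysis.
From mathcomp.real_closed Require Import complex.

Set Implicit Arguments.
Unset Strict Implicit.
Unset Printing Implicit Defensive.

Import Order.TTheory GRing.Theory Num.Theory.
Import numFieldNormedType.Exports.
Local Open Scope classical_set_scope.
Local Open Scope ring_scope.

Definition KK (R : realType) (c : bool) : numFieldType :=
  if c then (R[i] : numFieldType) else (R : numFieldType).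

Inductive ninf := Fin of nat | Inf.

Section keller.
Variable (K : numFieldType).

Definition dirderiv (E F : tvsType K) (f : E -> F) (x y : E) (v : F) : Prop :=
  (fun t : K => t^-1 *: (f (x + t *: y) - f x)) @ (0 : K)^' --> v.

(* Keller C^n on U (for maps defined on U, represented by total maps whose
   values outside U are irrelevant). *)
Fixpoint isCk (n : nat) : forall (E F : tvsType K), set E -> (E -> F) -> Prop :=
  match n with
  | 0 => fun E F U f => {within U, continuous f}
  | m.+1 => fun E F U f =>
      {within U, continuous f} /\
      exists df : (E * E)%type -> F,
        (forall x, U x -> forall y, dirderiv f x y (df (x, y))) /\
        @isCk m (E * E)%type F (U `*` setT) df
  end.

Definition isCn (n : ninf) (E F : tvsType K) (U : set E) (f : E -> F) : Prop :=
  match n with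
  | Fin k => isCk k U f
  | Inf => forall k, isCk k U f
  end.

Definition bilinear_map (E1 E2 F : tvsType K) (b : E1 -> E2 -> F) : Prop :=
  (forall y (a : K) x x', b (a *: x + x') y = a *: b x y + b x' y) /\
  (forall x (a : K) y y', b x (a *: y + y') = a *: b x y + b x y').

Definition tvs_bounded (E : tvsType K) (B : set E) : Prop :=
  forall W : set E, nbhs (0 : E) W ->
    exists2 s : K, 0 < s & forall t : K, s < `|t| -> B `<=` (fun z => t *: z) @` W.

Definition seq_continuous2 (E1 E2 F : tvsType K) (b : E1 -> E2 -> F) : Prop :=
  forall (u : nat -> (E1 * E2)%type) (p : (E1 * E2)%type),
    u @ \oo --> p -> (fun k => b (u k).1 (u k).2) @ \oo --> b p.1 p.2.

Definition hypocontinuous2 (E1 E2 F : tvsType K) (S : set (set E2))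
    (b : E1 -> E2 -> F) : Prop :=
  (forall x, continuous (b x)) /\ (forall y, continuous (fun x => b x y)) /\
  (forall M W, S M -> nbhs (0 : F) W ->
     exists2 V : set E1, nbhs (0 : E1) V &
       forall x y, V x -> M y -> W (b x y)).
End keller.

Definition metrizable (R : realType) (X : topologicalType) : Prop :=
  exists d : X -> X -> R,
    [/\ forall x y, 0 <= d x y,
        forall x y, d x y = 0 <-> x = y,
        forall x y, d x y = d y x,
        forall x y z, d x z <= d x y + d y z &
        forall (x : X) (A : set X),
          nbhs x A <-> exists2 e : R, 0 < e & [set y | d x y < e] `<=` A].

Definition k_space (X : topologicalType) : Prop :=
  hausdorff_space X /\
  forall A : set X,
    (forall C : set X, compact C ->
       exists D : set X, closed D /\ A `&` C = D `&` C) ->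
    closed A.

(* [tpow X n] is X^(n+1) *)
Fixpoint tpow (X : topologicalType) (n : nat) : topologicalType :=
  match n with 0 => X | m.+1 => (tpow X m * X)%type end.

(* X is Hausdorff and X^n is a k-space for every n >= 1 (X^0 is a point) *)
Definition k_infty_space (X : topologicalType) : Prop :=
  hausdorff_space X /\ forall n, k_space (tpow X n).

(* The directional derivative of b \o f at x in direction y is
   b (df (x, y)).1 (f x).2 + b (f x).1 (df (x, y)).2, a sum of two maps of the
   form b \o G on U x X with G of class C^k whenever f is C^(k+1).  Both
   hypotheses pass from X to X x X, so induction on k reduces everything to
   continuity of b \o g.  Under (a) b \o g is sequentially continuous, which is
   enough on a first countable space.  Under (b) a convergent sequence together
   with its limit is compact, so b is sequentially continuous as well (which
   controls the difference quotients), and hypocontinuity makes b \o g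
   continuous on every compact set, which is enough on a k-space. *)

From HB Require Import structures.
From mathcomp Require Import all_boot all_order all_algebra.
From mathcomp Require Import all_classical all_reals all_analysis.
From mathcomp.real_closed Require Import complex.
Import Order.TTheory GRing.Theory Num.Theory.
Import numFieldNormedType.Exports.
Local Open Scope classical_set_scope.
Local Open Scope ring_scope.
Set Implicit Arguments.
Unset Strict Implicit.
Unset Printing Implicit Defensive.

Section nested_basis.
Context {T : Type}.

Definition nested_basis (F : set_system T) (B : nat -> set T) :=
  [/\ forall n, F (B n), forall n, B n.+1 `<=` B n &
      forall A, F A -> exists n, B n `<=` A].

Variables (F : set_system T) (B : nat -> set T).
Hypothesis FB : nested_basis F B.

Lemma nested_basis_le m n : (m <= n)%N -> B n `<=` B m.
Proof.
have [_ BS _] := FB; move=> /subnK <-; elim: (n - m)%N => [|k IH] //=.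
by rewrite addSn; apply: subset_trans (BS _) IH.
Qed.

Lemma nested_basis_seq (s : nat -> T) : (forall n, B n (s n)) -> s @ \oo --> F.
Proof.
move=> Bs A FA; have [_ _ /(_ A FA) [m BmA]] := FB.
by exists m => // n /= mn; apply: BmA; exact: (nested_basis_le mn (Bs n)).
Qed.

Lemma cvg_nested_basis {Z : topologicalType} (phi : T -> Z) (l : Z) : Filter F ->
  (forall s : nat -> T, (forall n, B n (s n)) -> phi (s n) @[n --> \oo] --> l) ->
  phi @ F --> l.
Proof.
move=> FF phis W Wl; apply: contrapT => nFW.
have /choice [s sB] : forall n, exists t, B n t /\ ~ W (phi t).
  move=> n; apply: contrapT => H; apply: nFW.
  have [BF _ _] := FB; suff : F (phi @^-1` W) by [].
  apply: filterS (BF n) => t Bt.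
  by apply: contrapT => nW; apply: H; exists t.
have [m _ /(_ m (leqnn m))] := phis s (fun n => (sB n).1) W Wl.
exact: (sB m).2.
Qed.

End nested_basis.

Definition first_countable (X : topologicalType) :=
  forall x : X, exists B, nested_basis (nbhs x) B.

Lemma first_countable_prod (X Y : topologicalType) :
  first_countable X -> first_countable Y -> first_countable (X * Y)%type.
Proof.
move=> FX FY [x y]; have [B1 B1x] := FX x; have [B2 B2y] := FY y.
have [B1n B1S B1A] := B1x; have [B2n B2S B2A] := B2y.
exists (fun n => B1 n `*` B2 n); split.
- by move=> n; exists (B1 n, B2 n) => //; split; [exact: B1n|exact: B2n].
- by move=> n [a b] [/= ? ?]; split; [exact: B1S|exact: B2S].
move=> A [[P Q] [/= /B1A [n1 H1] /B2A [n2 H2]] PQA]; exists (maxn n1 n2).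
move=> [a b] [/= Ha Hb]; apply: PQA; split.
  by apply/H1/(nested_basis_le B1x (leq_maxl n1 n2)).
by apply/H2/(nested_basis_le B2y (leq_maxr n1 n2)).
Qed.

Lemma metrizable_first_countable (R : realType) (X : topologicalType) :
  metrizable R X -> first_countable X.
Proof.
move=> [d [_ _ _ _ dN]] x.
exists (fun n => [set y | d x y < n.+1%:R^-1]); split.
- by move=> n; apply/dN; exists n.+1%:R^-1; rewrite ?invr_gt0.
- move=> n y /= /lt_le_trans; apply.
  by rewrite lef_pV2 ?posrE // ler_nat.
- move=> A /dN [e e0 eA].
  have [m _ /(_ m (leqnn m)) me] := near_infty_natSinv_lt (PosNum e0).
  by exists m => y /= /lt_trans /(_ me) /eA.
Qed.

Lemma first_countable_continuous_at (X Z : topologicalType) (g : X -> Z) (x : X) :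
  first_countable X ->
  (forall u : nat -> X, u @ \oo --> x -> g (u n) @[n --> \oo] --> g x) ->
  {for x, continuous g}.
Proof.
move=> /(_ x) [B xB] gu; apply: (cvg_nested_basis xB) => s Bs.
exact/gu/(nested_basis_seq xB).
Qed.

Lemma cvg_compact_range (T : topologicalType) (s : nat -> T) (l : T) :
  s @ \oo --> l -> compact (range s `|` [set l]).
Proof.
move=> sl F PF FM; have [cl|ncl] := pselect (cluster F l).
  by exists l; split => //; right.
have [A [V [FA Vl AV]]] : exists A V, [/\ F A, nbhs l V & A `&` V = set0].
  apply: contrapT => H; apply: ncl => A V FA Vl; apply: contrapT => nAV.
  apply: H; exists A, V; split => //; apply/seteqP; split => // x Hx.
  by apply: nAV; exists x.
have [N _ HN] := sl V Vl.
have FN : F [set s n | n in `I_N].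
  apply: filterS (filterI FA FM) => x [Ax [[n _ sx]|xl]].
    rewrite -sx in Ax *.
    have [nN|Nn] := ltnP n N; first by exists n.
    have : (A `&` V) (s n) := conj Ax (HN n Nn).
    by rewrite AV.
  rewrite xl in Ax *; have : (A `&` V) l := conj Ax (nbhs_singleton Vl).
  by rewrite AV.
have [a [[n _ <-] ca]] := finite_compact (finite_image s (finite_II N)) PF FN.
by exists (s n); split => //; left; exists n.
Qed.

Definition compactly_generated (X : topologicalType) := forall A : set X,
  (forall C, compact C -> exists D, closed D /\ A `&` C = D `&` C) -> closed A.

Definition homeomorphism {X Y : topologicalType} (h : X -> Y) :=
  exists h' : Y -> X, [/\ continuous h, continuous h', cancel h h' & cancel h' h].

Lemma homeomorphism_id (X : topologicalType) : homeomorphism (@id X).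
Proof. by exists id; split => // x; apply: cvg_id. Qed.

Lemma homeomorphism_comp (X Y Z : topologicalType) (f : X -> Y) (g : Y -> Z) :
  homeomorphism f -> homeomorphism g -> homeomorphism (g \o f).
Proof.
move=> [f' [cf cf' fK f'K]] [g' [cg cg' gK g'K]]; exists (f' \o g'); split.
- by move=> x; apply: continuous_comp; [exact: cf|exact: cg].
- by move=> x; apply: continuous_comp; [exact: cg'|exact: cf'].
- by move=> x /=; rewrite gK fK.
- by move=> x /=; rewrite f'K g'K.
Qed.

Lemma continuous_prod_map (X1 X2 Y1 Y2 : topologicalType) (h1 : X1 -> Y1)
    (h2 : X2 -> Y2) :
  continuous h1 -> continuous h2 -> continuous (fun p => (h1 p.1, h2 p.2)).
Proof.
move=> c1 c2 p; apply: cvg_pair.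
  by apply: continuous_comp; [exact: cvg_fst|exact: c1].
by apply: continuous_comp; [exact: cvg_snd|exact: c2].
Qed.

Lemma homeomorphism_prod (X1 X2 Y1 Y2 : topologicalType) (h1 : X1 -> Y1)
    (h2 : X2 -> Y2) :
  homeomorphism h1 -> homeomorphism h2 -> homeomorphism (fun p => (h1 p.1, h2 p.2)).
Proof.
move=> [g1 [c1 c1' K1 K1']] [g2 [c2 c2' K2 K2']].
exists (fun p => (g1 p.1, g2 p.2)); split; try exact: continuous_prod_map.
- by move=> [a b] /=; rewrite K1 K2.
- by move=> [a b] /=; rewrite K1' K2'.
Qed.

Lemma homeomorphism_prodAr (X Y Z : topologicalType) :
  homeomorphism (@unstable.prodAr X Y Z).
Proof.
exists (@unstable.prodA X Y Z); split.
- exact: prodAr_continuous.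
- exact: prodA_continuous.
- by move=> [a [b c]].
- by move=> [[a b] c].
Qed.

Lemma tpow_square_homeomorphism (X : topologicalType) n :
  exists m (h : tpow (X * X)%type n -> tpow X m), homeomorphism h.
Proof.
elim: n => [|n [m [h hh]]]; first by exists 1%N, id; exact: homeomorphism_id.
exists m.+2, (@unstable.prodAr (tpow X m) X X \o (fun p => (h p.1, p.2))).
apply: homeomorphism_comp; last exact: homeomorphism_prodAr.
exact: homeomorphism_prod hh (homeomorphism_id _).
Qed.

Lemma compactly_generated_homeomorphism (X Y : topologicalType) (h : X -> Y) :
  homeomorphism h -> compactly_generated Y -> compactly_generated X.
Proof.
move=> [g [ch cg hK gK]] kY A HA.
have cgA : closed (g @^-1` A).
  apply: kY => C' cC'.
  have cC : compact (g @` C').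
    by apply: continuous_compact => //; exact: continuous_subspaceT.
  have [D [clD HD]] := HA _ cC.
  exists (g @^-1` D); split; first by move/continuous_closedP : cg; apply.
  apply/seteqP; split => y [Ay Cy].
    have : (A `&` g @` C') (g y) by split => //; exists y.
    by rewrite HD => -[].
  have : (D `&` g @` C') (g y) by split => //; exists y.
  by rewrite -HD => -[].
have -> : A = h @^-1` (g @^-1` A) by apply/seteqP; split => x /=; rewrite hK.
by move/continuous_closedP : ch; apply.
Qed.

Lemma compactly_generated_tpow_square (X : topologicalType) :
  (forall n, compactly_generated (tpow X n)) ->
  forall n, compactly_generated (tpow (X * X)%type n).
Proof.
move=> kX n; have [m [h hh]] := tpow_square_homeomorphism X n.
exact: compactly_generated_homeomorphism hh (kX m).
Qed.

(* The points of N where h leaves the interior of W form a set that meets every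
   compact set in a closed set; it is therefore closed, and it misses x0. *)
Lemma compactly_generated_continuous_at (X Z : topologicalType) (h : X -> Z)
    (N : set X) (x0 : X) :
  compactly_generated X -> closed N -> nbhs x0 N ->
  (forall C z, compact C -> (C `&` N) z -> h @ within (C `&` N) (nbhs z) --> h z) ->
  {for x0, continuous h}.
Proof.
move=> kX clN Nx0 hCN W hW; pose O := W°.
pose P := N `&` (h @^-1` (~` O)).
have clP : closed P.
  apply: kX => C cC; exists (closure (P `&` C)); split; first exact: closed_closure.
  apply/seteqP; split => z; first by move=> [Pz Cz]; split => //; apply: subset_closure.
  move=> [clz Cz]; have Nz : N z by apply/clN/(closureS _ clz) => w [[]].
  split => //; split => // Oz.
  have /hCN : (C `&` N) z by [].
  move=> /(_ cC O (open_nbhs_nbhs (conj (@open_interior _ W) Oz))).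
  by move=> /clz [w [[[Nw nOw] Cw] /(_ (conj Cw Nw))]].
have : nbhs x0 (~` P).
  apply: open_nbhs_nbhs; split; first exact: closed_openC.
  by move=> [_]; apply; exact: hW.
move=> nPx0; apply: filterS (filterI Nx0 nPx0) => t [Nt nPt].
apply: contrapT => nW; apply: nPt; split => // Ot; apply: nW.
exact: nbhs_singleton Ot.
Qed.

Lemma cvg_fst_comp {T : Type} {X Y : topologicalType} (G : set_system T)
    {FG : Filter G} (h : T -> (X * Y)%type) (p : (X * Y)%type) :
  h @ G --> p -> (h t).1 @[t --> G] --> p.1.
Proof. by move=> hp; apply: (cvg_comp _ _ hp); exact: cvg_fst. Qed.

Lemma cvg_snd_comp {T : Type} {X Y : topologicalType} (G : set_system T)
    {FG : Filter G} (h : T -> (X * Y)%type) (p : (X * Y)%type) :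
  h @ G --> p -> (h t).2 @[t --> G] --> p.2.
Proof. by move=> hp; apply: (cvg_comp _ _ hp); exact: cvg_snd. Qed.

Section bilinear_continuity.
Context {K : numFieldType}.

Lemma tvs_cvgD {T : Type} {F : tvsType K} (G : set_system T) {FG : Filter G}
    (f g : T -> F) (a c : F) :
  f @ G --> a -> g @ G --> c -> (fun x => f x + g x) @ G --> a + c.
Proof.
move=> fa gc; apply: (@continuous2_cvg _ _ _ _ _ _ f g (fun x y => x + y)) => //.
exact: (@add_continuous F (a, c)).
Qed.

Lemma tvs_cvgB {T : Type} {F : tvsType K} (G : set_system T) {FG : Filter G}
    (f g : T -> F) (a c : F) :
  f @ G --> a -> g @ G --> c -> (fun x => f x - g x) @ G --> a - c.
Proof.
move=> fa gc; apply: (@continuous2_cvg _ _ _ _ _ _ f g (fun x y => x - y)) => //.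
exact: (@sub_continuous F (a, c)).
Qed.

Context {E1 E2 F : tvsType K} (b : E1 -> E2 -> F).
Hypothesis bb : bilinear_map b.

Let linear_bl y : linear (b^~ y). Proof. exact: bb.1. Qed.
Let linear_br x : linear (b x). Proof. exact: bb.2. Qed.

Lemma bilinearBl x x' y : b (x - x') y = b x y - b x' y.
Proof. by have := zmod_morphism_linear (linear_bl y); apply. Qed.

Lemma bilinearZl a x y : b (a *: x) y = a *: b x y.
Proof. by have := scalable_linear (linear_bl y); apply. Qed.

Lemma bilinearBr x y y' : b x (y - y') = b x y - b x y'.
Proof. by have := zmod_morphism_linear (linear_br x); apply. Qed.

Lemma bilinearZr a x y : b x (a *: y) = a *: b x y.
Proof. by have := scalable_linear (linear_br x); apply. Qed.

Lemma seq_continuous2_cvg {T : Type} (G : set_system T) {FG : Filter G} B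
    (h : T -> (E1 * E2)%type) (p : (E1 * E2)%type) :
  seq_continuous2 b -> nested_basis G B -> h @ G --> p ->
  (fun t => b (h t).1 (h t).2) @ G --> b p.1 p.2.
Proof.
move=> sb GB hp; apply: (cvg_nested_basis GB) => s Bs; apply: (sb (h \o s)).
exact: cvg_comp (nested_basis_seq GB Bs) hp.
Qed.

Lemma seq_continuous2_continuous_at (X : topologicalType) (g : X -> (E1 * E2)%type)
    (x : X) :
  first_countable X -> seq_continuous2 b -> {for x, continuous g} ->
  {for x, continuous (fun x => b (g x).1 (g x).2)}.
Proof.
move=> fX sb gx; apply: first_countable_continuous_at => // u ux.
exact: (sb (g \o u)) (cvg_comp _ _ ux gx).
Qed.

Section hypocontinuous.
Variables (S : set (set E2)).
Hypotheses (bS : hypocontinuous2 S b) (compactS : forall M, compact M -> S M).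

(* b (x, y) - b (p.1, y) = b (x - p.1, y) is small uniformly in y \in M. *)
Lemma hypocontinuous2_cvg {T : Type} (G : set_system T) {FG : Filter G}
    (h : T -> (E1 * E2)%type) (p : (E1 * E2)%type) (M : set E2) :
  S M -> h @ G --> p -> (\forall t \near G, M (h t).2) ->
  (fun t => b (h t).1 (h t).2) @ G --> b p.1 p.2.
Proof.
move=> SM hp hM; have [b_cont [_ bSM]] := bS.
have -> : (fun t => b (h t).1 (h t).2) =
    (fun t => b ((h t).1 - p.1) (h t).2 + b p.1 (h t).2).
  by apply: funext => t; rewrite bilinearBl subrK.
rewrite -[b p.1 p.2]add0r; apply: tvs_cvgD; last first.
  exact: (cvg_comp _ _ (cvg_snd_comp hp) (b_cont _ _)).
move=> W /(bSM M W SM) [V V0 VMW].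
have h1 : ((h t).1 - p.1) @[t --> G] --> 0.
  by rewrite -(subrr p.1); apply: tvs_cvgB; [exact: cvg_fst_comp hp|exact: cvg_cst].
have hV : G (fun t => V ((h t).1 - p.1)) := h1 V V0.
suff : G (fun t => W (b ((h t).1 - p.1) (h t).2)) by [].
by apply: filterS (filterI hV hM) => t [Vt Mt]; exact: VMW.
Qed.

Lemma hypocontinuous2_seq_continuous : seq_continuous2 b.
Proof.
move=> u p up; apply: (hypocontinuous2_cvg (M := range (fun n => (u n).2) `|` [set p.2])).
- exact/compactS/cvg_compact_range/(cvg_snd_comp up).
- exact: up.
- by apply: nearW => n; left; exists n.
Qed.

Lemma hypocontinuous2_continuous_at (X : topologicalType) (g : X -> (E1 * E2)%type)
    (N : set X) (x0 : X) :
  compactly_generated X -> closed N -> nbhs x0 N ->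
  (forall x, N x -> {for x, continuous g}) ->
  {for x0, continuous (fun x => b (g x).1 (g x).2)}.
Proof.
move=> kX clN Nx0 gN; apply: (compactly_generated_continuous_at kX clN Nx0).
move=> C z cC [_ Nz]; have cCN := compact_closedI cC clN.
have cM : compact ((fun x => (g x).2) @` (C `&` N)).
  apply: continuous_compact => //; apply: continuous_in_subspaceT => w.
  rewrite inE => -[_ Nw].
  by apply: continuous_comp; [exact: gN|exact: cvg_snd].
apply: (hypocontinuous2_cvg (compactS cM)).
  by move=> A /(gN z Nz) /(cvg_within (C `&` N)).
suff : nbhs z (fun t => (C `&` N) t -> exists2 x, (C `&` N) x & (g x).2 = (g t).2).
  by [].
by apply: filterE => t Ct; exists t.
Qed.

End hypocontinuous.
End bilinear_continuity.

Lemma open_setXT (X Y : topologicalType) (U : set X) :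
  open U -> open (U `*` [set: Y]).
Proof.
by rewrite setXT; apply: (proj1 (continuousP _)) => p; exact: cvg_fst.
Qed.

Lemma within_continuous_comp (X Y Z : topologicalType) (U : set X) (f : X -> Y)
    (P : Y -> Z) :
  continuous P -> {within U, continuous f} -> {within U, continuous (P \o f)}.
Proof. by move=> cP cf x; exact: (continuous_comp (cf x) (cP _)). Qed.

Lemma within_continuous_pair (X Y Z : topologicalType) (U : set X) (f : X -> Y)
    (g : X -> Z) :
  {within U, continuous f} -> {within U, continuous g} ->
  {within U, continuous (fun x => (f x, g x))}.
Proof. by move=> cf cg x; apply: cvg_pair; [exact: cf|exact: cg]. Qed.

Lemma open_within_continuous_precomp (X Y Z : topologicalType) (U : set Y)
    (V : set X) (L : X -> Y) (f : Y -> Z) :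
  continuous L -> open U -> open V -> (forall z, V z -> U (L z)) ->
  {within U, continuous f} -> {within V, continuous (f \o L)}.
Proof.
move=> cL oU oV VU; rewrite !continuous_open_subspace // => cf z.
rewrite inE => Vz; apply: continuous_comp; first exact: cL.
by apply: cf; rewrite inE; exact: VU.
Qed.

Section Keller_differentiability.
Context {K : numFieldType}.

Lemma isCkW k (E F : tvsType K) (U : set E) (f : E -> F) :
  isCk k.+1 U f -> isCk k U f.
Proof.
elim: k E F U f => [|k IH] E F U f; first by case.
by move=> [cf [df [fdf dfk]]]; split => //; exists df; split => //; exact: IH.
Qed.

Lemma isCk_linear_comp k (E F G : tvsType K) (U : set E) (f : E -> F) (P : F -> G) :
  linear P -> continuous P -> isCk k U f -> isCk k U (P \o f).
Proof.
elim: k E F G U f P => [|k IH] E F G U f P lP cP.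
  exact: within_continuous_comp.
move=> [cf [df [fdf dfk]]]; split; first exact: within_continuous_comp.
exists (P \o df); split; last exact: IH.
move=> x Ux y; rewrite /dirderiv.
have PB := zmod_morphism_linear lP; have PZ := scalable_linear lP.
have -> : (fun t : K => t^-1 *: ((P \o f) (x + t *: y) - (P \o f) x)) =
    P \o (fun t : K => t^-1 *: (f (x + t *: y) - f x)).
  by apply: funext => t /=; rewrite PZ PB.
exact: (continuous_cvg _ (cP _) (fdf x Ux y)).
Qed.

Lemma isCk_pair k (E F G : tvsType K) (U : set E) (f : E -> F) (g : E -> G) :
  isCk k U f -> isCk k U g -> isCk k U (fun x => (f x, g x)).
Proof.
elim: k E F G U f g => [|k IH] E F G U f g.
  exact: within_continuous_pair.
move=> [cf [df [fdf dfk]]] [cg [dg [gdg dgk]]].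
split; first exact: within_continuous_pair.
exists (fun z => (df z, dg z)); split; last exact: IH.
by move=> x Ux y; apply: cvg_pair; [exact: fdf|exact: gdg].
Qed.

Lemma isCk_comp_linear k (E' E F : tvsType K) (U : set E) (V : set E')
    (L : E' -> E) (f : E -> F) :
  linear L -> continuous L -> open U -> open V -> (forall z, V z -> U (L z)) ->
  isCk k U f -> isCk k V (f \o L).
Proof.
elim: k E' E F U V L f => [|k IH] E' E F U V L f lL cL oU oV VU.
  exact: open_within_continuous_precomp.
move=> [cf [df [fdf dfk]]].
split; first exact: open_within_continuous_precomp cf.
exists (df \o (fun p => (L p.1, L p.2))); split.
  move=> z Vz w; rewrite /dirderiv.
  have -> : (fun t : K => t^-1 *: ((f \o L) (z + t *: w) - (f \o L) z)) =
      (fun t : K => t^-1 *: (f (L z + t *: L w) - f (L z))).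
    by apply: funext => t /=; rewrite (addrC z) lL (addrC (t *: L w)).
  exact: fdf (VU z Vz) (L w).
apply: (IH _ _ _ (U `*` setT)) => //.
- by move=> a p q /=; rewrite !lL.
- exact: continuous_prod_map.
- exact: open_setXT.
- exact: open_setXT.
- by move=> [p1 p2] [/= Vp _]; split => //; exact: VU.
Qed.

Lemma isCk_add k (E F : tvsType K) (U : set E) (f g : E -> F) :
  isCk k U f -> isCk k U g -> isCk k U (fun x => f x + g x).
Proof.
move=> fk gk; have := isCk_linear_comp (P := fun p : (F * F)%type => p.1 + p.2) _ _
  (isCk_pair fk gk); apply.
- by move=> a [p1 p2] [q1 q2] /=; rewrite scalerDr addrACA.
- by move=> p; exact: (@add_continuous F p).
Qed.

End Keller_differentiability.

(* Stated directly because KK R true = R[i] carries no archimedean structure. *)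
Definition inv_nat_archimedean (K : numFieldType) :=
  forall e : K, 0 < e -> exists n : nat, n.+1%:R^-1 < e.

Lemma KK_inv_nat_archimedean (R : realType) (c : bool) :
  inv_nat_archimedean (KK R c).
Proof.
case: c => /= e e0.
  have e0' : 0 < complex.Re e by move: e0; rewrite ltcE => /andP[].
  have [m _ /(_ m (leqnn m)) me] := near_infty_natSinv_lt (PosNum e0').
  exists m; rewrite ltcE; move: e0; rewrite ltcE => /andP[/eqP -> _].
  by rewrite -(rmorph_nat (@real_complex R)) -fmorphV /= eqxx.
have [m _ /(_ m (leqnn m)) me] := near_infty_natSinv_lt (PosNum e0).
by exists m.
Qed.

Section directional_derivative.
Context {K : numFieldType}.

Lemma dnbhs0_nested_basis : inv_nat_archimedean K ->
  nested_basis ((0 : K)^') (fun n => [set t : K | t != 0 /\ `|t| < n.+1%:R^-1]).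
Proof.
move=> archK; split.
- move=> n; suff : nbhs (0 : K) (fun t => t != 0 -> t != 0 /\ `|t| < n.+1%:R^-1).
    by [].
  apply: (proj2 (@nbhs_norm0P K K _)); exists n.+1%:R^-1; first by rewrite /= invr_gt0.
  by move=> t /= tlt tne; split => //; move: tlt; rewrite sub0r normrN.
- move=> n t [tne tn]; split => //; apply: lt_le_trans tn _.
  by rewrite lef_pV2 ?posrE // ler_nat.
- move=> A; rewrite /dnbhs /within /= => /nbhs_norm0P [e /= e0 eA].
  have [n ne] := archK e e0; exists n => t [tne tn]; apply: eA => //=.
  exact: lt_trans tn ne.
Qed.

Lemma cvg_line (X : tvsType K) (x y : X) : (fun t : K => x + t *: y) @ (0 : K)^' --> x.
Proof.
have : (fun t : K => x + t *: y) @ (nbhs (0 : K)) --> x + 0 *: y.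
  apply: (@continuous2_cvg _ _ _ _ _ _ (fun=> x) (fun t => t *: y) (fun u v => u + v)).
  - exact: (@add_continuous X (x, 0 *: y)).
  - exact: cvg_cst.
  apply: (@continuous2_cvg _ K^o X X _ _ (fun t => t) (fun=> y) (fun u v => u *: v)).
  - exact: (@scale_continuous K X (0, y)).
  - exact: cvg_id.
  - exact: cvg_cst.
rewrite scale0r addr0 => h A /h.
exact: (@cvg_within K (nbhs (0 : K)) _ (fun t : K => t != 0)).
Qed.

Context {E1 E2 F : tvsType K} (b : E1 -> E2 -> F).
Hypotheses (bb : bilinear_map b) (sb : seq_continuous2 b).

(* Product rule, from b (a1, a2) - b (c1, c2) = b (a1 - c1, a2) + b (c1, a2 - c2). *)
Lemma dirderiv_bilinear_comp (X : tvsType K) (f : X -> (E1 * E2)%type)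
    (x y : X) (v : (E1 * E2)%type) :
  inv_nat_archimedean K -> {for x, continuous f} -> dirderiv f x y v ->
  dirderiv (fun x => b (f x).1 (f x).2) x y (b v.1 (f x).2 + b (f x).1 v.2).
Proof.
move=> archK fx fv; have B0 := dnbhs0_nested_basis archK.
have fxt : (fun t : K => f (x + t *: y)) @ (0 : K)^' --> f x.
  apply: (@continuous_cvg _ _ _ _ _ (fun t : K => x + t *: y) f x) => //.
  exact: cvg_line.
set q := fun t : K => t^-1 *: (f (x + t *: y) - f x).
rewrite /dirderiv.
have -> : (fun t : K =>
    t^-1 *: (b (f (x + t *: y)).1 (f (x + t *: y)).2 - b (f x).1 (f x).2)) =
    (fun t => b (q t).1 (f (x + t *: y)).2 + b (f x).1 (q t).2).
  apply: funext => t; rewrite /q /= (bilinearZl bb) (bilinearZr bb) -scalerDr.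
  by rewrite (bilinearBl bb) (bilinearBr bb) addrA subrK.
apply: tvs_cvgD.
  apply: (seq_continuous2_cvg (h := fun t => ((q t).1, (f (x + t *: y)).2))
    (p := (v.1, (f x).2)) sb B0).
  by apply: cvg_pair; [exact: cvg_fst_comp fv|exact: cvg_snd_comp fxt].
apply: (seq_continuous2_cvg (h := fun t => ((f x).1, (q t).2)) (p := ((f x).1, v.2))
  sb B0).
by apply: cvg_pair; [exact: cvg_cst|exact: cvg_snd_comp fv].
Qed.

End directional_derivative.

Section bilinear_composition.
Context {K : numFieldType} {E1 E2 F : tvsType K} (b : E1 -> E2 -> F).
Hypotheses (bb : bilinear_map b) (archK : inv_nat_archimedean K).

(* Hypotheses (a) and (b), with metrizability weakened to first countability. *)
Definition admissible_domain (X : topologicalType) :=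
  (first_countable X /\ seq_continuous2 b) \/
  ((forall n, compactly_generated (tpow X n)) /\
   exists S : set (set E2), (forall M, compact M -> S M) /\ hypocontinuous2 S b).

Lemma admissible_domain_square X :
  admissible_domain X -> admissible_domain (X * X)%type.
Proof.
case=> [[fX sb]|[kX bS]]; [left|right]; split => //.
  exact: first_countable_prod.
exact: compactly_generated_tpow_square.
Qed.

Lemma admissible_domain_seq_continuous X :
  admissible_domain X -> seq_continuous2 b.
Proof.
by case=> [[_ sb]|[_ [S [cS bS]]]] //; exact: hypocontinuous2_seq_continuous bS cS.
Qed.

Lemma admissible_domain_continuous (X : tvsType K) (U : set X)
    (g : X -> (E1 * E2)%type) :
  admissible_domain X -> open U -> {within U, continuous g} ->
  {within U, continuous (fun x => b (g x).1 (g x).2)}.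
Proof.
move=> aX oU; rewrite !continuous_open_subspace // => cg x; rewrite inE => Ux.
have gU z : U z -> {for z, continuous g} by move=> Uz; apply: cg; rewrite inE.
case: aX => [[fX sb]|[kX [S [cS bS]]]].
  exact: seq_continuous2_continuous_at (gU x Ux).
have [N Nx NU] : exists2 N, nbhs x N & closure N `<=` U.
  by apply: uniform_regular; exact: open_nbhs_nbhs.
apply: (hypocontinuous2_continuous_at bb bS cS (N := closure N) (kX 0%N)).
- exact: closed_closure.
- by apply: filterS Nx; exact: subset_closure.
- by move=> z /NU; exact: gU.
Qed.

Lemma isCk_bilinear_comp k (X : tvsType K) (U : set X) (f : X -> (E1 * E2)%type) :
  admissible_domain X -> open U -> isCk k U f ->
  isCk k U (fun x => b (f x).1 (f x).2).
Proof.
elim: k X U f => [|k IH] X U f aX oU; first exact: admissible_domain_continuous.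
move=> fk; have [cf [df [fdf dfk]]] := fk.
split; first exact: admissible_domain_continuous.
pose G1 z := ((df z).1, (f z.1).2); pose G2 z := ((f z.1).1, (df z).2).
exists (fun z => b (G1 z).1 (G1 z).2 + b (G2 z).1 (G2 z).2); split.
  move=> x Ux y; have sb := admissible_domain_seq_continuous aX.
  apply: (dirderiv_bilinear_comp bb sb (v := df (x, y)) archK); last exact: fdf.
  by move: cf; rewrite continuous_open_subspace // => /(_ x); apply; rewrite inE.
have oUX : open (U `*` [set: X]) by exact: open_setXT.
have fstk : isCk k (U `*` [set: X]) (f \o fst).
  apply: (isCk_comp_linear (U := U)) => //; first by move=> p; exact: cvg_fst.
  - by move=> z [].
  - exact: isCkW.
have jetk := isCk_pair dfk fstk.
have aXX := admissible_domain_square aX.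
apply: isCk_add; apply: IH aXX oUX _.
  apply: (isCk_linear_comp (P := fun p : ((E1 * E2) * (E1 * E2))%type =>
    (p.1.1, p.2.2))) jetk => //.
  by apply: (@continuous_prod_map _ _ _ _ fst snd) => q; [exact: cvg_fst|exact: cvg_snd].
apply: (isCk_linear_comp (P := fun p : ((E1 * E2) * (E1 * E2))%type =>
  (p.2.1, p.1.2))) jetk => //.
move=> p; apply: cvg_pair.
  by apply: (@continuous_comp _ _ _ snd fst); [exact: cvg_snd|exact: cvg_fst].
by apply: (@continuous_comp _ _ _ fst snd); [exact: cvg_fst|exact: cvg_snd].
Qed.

End bilinear_composition.

Theorem theorem2p5 (R : realType) (c : bool) :
  (forall (X : topologicalType) (E1 E2 F : tvsType (KK R c))
     (b : E1 -> E2 -> F) (f : X -> (E1 * E2)%type),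
     hausdorff_space E1 -> hausdorff_space E2 -> hausdorff_space F ->
     bilinear_map b -> continuous f ->
     (metrizable R X /\ seq_continuous2 b) \/
     (k_infty_space X /\
      exists S : set (set E2),
        (forall M, S M -> tvs_bounded M) /\
        (forall M, compact M -> S M) /\ hypocontinuous2 S b) ->
     continuous (fun x => b (f x).1 (f x).2)) /\
  (forall (n : ninf) (X E1 E2 F : tvsType (KK R c)) (U : set X)
     (b : E1 -> E2 -> F) (f : X -> (E1 * E2)%type),
     n <> Fin 0 ->
     hausdorff_space X -> hausdorff_space E1 -> hausdorff_space E2 ->
     hausdorff_space F -> open U ->
     bilinear_map b -> isCn n U f ->
     (metrizable R X /\ seq_continuous2 b) \/
     (k_infty_space X /\
      exists S : set (set E2),
        (forall M, S M -> tvs_bounded M) /\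
        (forall M, compact M -> S M) /\ hypocontinuous2 S b) ->
     isCn n U (fun x => b (f x).1 (f x).2)).
Proof.
split.
  move=> X E1 E2 F b f _ _ _ bb cf [[mX sb]|[kX [S [_ [cS bS]]]]] x.
    exact: seq_continuous2_continuous_at (metrizable_first_countable mX) sb (cf x).
  apply: (hypocontinuous2_continuous_at bb bS cS (kX.2 0%N).2 closedT filterT).
  by move=> z _; exact: cf.
move=> n X E1 E2 F U b f _ _ _ _ _ oU bb fn domX.
have aX : admissible_domain b X.
  case: domX => [[mX sb]|[kX [S [_ [cS bS]]]]]; [left|right]; split => //.
  - exact: metrizable_first_countable mX.
  - by move=> m; exact: (kX.2 m).2.
  - by exists S.
have archK := @KK_inv_nat_archimedean R c.
by case: n fn => [k|] fn /=; [|move=> k]; exact: isCk_bilinear_comp.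
Qed.
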